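(* The Hopf algebra $H_{\operatorname{NAP}}$ is a free commutative algebra on the elements $\mathsf{F}_{[t]}$ where $t$ runs over the unlabeled rooted trees whose root has exactly one child (root-valence $1$).
   Context: $\Pi_{\operatorname{NAP}}(I)$ is the set of forests of rooted trees with vertex set exactly $I$, ordered by: $y$ covers $x$ iff $y$ is obtained from $x$ by adding an edge from the root of one component of $x$ to the root of another component (the latter root remaining the root); $\widehat{0}$ is the forest of one-vertex trees. For a rooted tree $t$ on $I$, $[\widehat{0},t]$ is an interval in $\Pi_{\operatorname{NAP}}(I)$, whose isomorphism class depends only on the unlabeled tree underlying $t$. $H_{\operatorname{NAP}}$ is the incidence Hopf algebra (Schmitt's construction) of this family: it has a basis $\mathsf{F}_{[Q]}$ indexed by isomorphism classes of finite products $Q$ of posets $[\widehat{0},t]$ ($t$ rooted trees), product $\mathsf{F}_{[Q]}\mathsf{F}_{[Q']}=\mathsf{F}_{[Q\times Q']}$, unit the class of the one-element poset, coproduct $\Delta\mathsf{F}_{[Q]}=\sum_{x\in Q}\mathsf{F}_{[\widehat{0},x]}\otimes\mathsf{F}_{[x,\widehat{1}]}$. We write $\mathsf{F}_{[t]}=\mathsf{F}_{[[\widehat{0},t]]}$. *)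

From HB Require Import structures.
From mathcomp Require Import all_boot.
Set Implicit Arguments. Unset Strict Implicit. Unset Printing Implicit Defensive.

(** * Rooted forests on the vertex set 'I_n, encoded by parent functions.
    [x i = None] means that [i] is a root; [x i = Some j] means that [j] is the
    parent of [i]. *)

Definition pfun (n : nat) := {ffun 'I_n -> option 'I_n}.

Definition is_forest n (x : pfun n) : bool :=
  [forall i : 'I_n, iter n (obind (fun j => x j)) (Some i) == None].

Definition nap0 n : pfun n := [ffun _ => None].

(** covering relation of Pi_NAP('I_n): y is obtained from the forest x by
    adding an edge from the root r1 of one component to the root r2 of another
    component (r2 remaining the root). *)
Definition nap_cover n (x y : pfun n) : bool :=
  is_forest x &&
  [exists r1 : 'I_n, exists r2 : 'I_n,
     [&& r1 != r2, x r1 == None, x r2 == None &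
         y == [ffun i => if i == r1 then Some r2 else x i]]].

Definition nap_le n : rel (pfun n) := connect (@nap_cover n).

Record rtree := RTree { rt_n : nat; rt_par : pfun rt_n }.

Definition is_rtree (t : rtree) : bool :=
  is_forest (rt_par t) && (#|[set i | rt_par t i == None]| == 1).

Definition root_valence1 (t : rtree) : bool :=
  [exists r : 'I_(rt_n t),
     (rt_par t r == None) && (#|[set i | rt_par t i == Some r]| == 1)].

(** isomorphism of rooted trees (i.e. equality of the underlying unlabeled trees) *)
Definition tree_iso (t1 t2 : rtree) : Prop :=
  exists f : 'I_(rt_n t1) -> 'I_(rt_n t2),
    bijective f /\ forall i, rt_par t2 (f i) = omap f (rt_par t1 i).

Definition dummy_tree : rtree := @RTree 0 [ffun i => None].

Record fposet := FPoset { fp_car : finType; fp_le : rel fp_car }.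

Definition fposet_iso (P Q : fposet) : Prop :=
  exists f : fp_car P -> fp_car Q,
    bijective f /\ forall x y, fp_le x y = fp_le (f x) (f y).

Definition fposet_unit : fposet := @FPoset unit (fun _ _ => true).

Definition fposet_prod (P Q : fposet) : fposet :=
  @FPoset (fp_car P * fp_car Q)%type
          (fun a b => fp_le a.1 b.1 && fp_le a.2 b.2).

Definition ival_car (t : rtree) :=
  {z : pfun (rt_n t) | nap_le (nap0 (rt_n t)) z && nap_le z (rt_par t)}.

Definition ival (t : rtree) : fposet :=
  @FPoset (ival_car t) (fun a b => nap_le (val a) (val b)).

Definition prod_ival (ts : seq rtree) : fposet :=
  foldr (fun t P => fposet_prod (ival t) P) fposet_unit ts.

From HB Require Import structures.
From mathcomp Require Import all_boot.
Set Implicit Arguments. Unset Strict Implicit. Unset Printing Implicit Defensive.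

(* A forest [z] below a tree [t] in Pi_NAP is determined by the set of
   vertices that already carry their [t]-edge, and these sets are exactly the
   order ideals of the poset of non-root vertices of [t] (ordered by descent).
   So a product of intervals [0^, t_i] is the lattice of ideals of the
   disjoint union of the non-root posets.

   Existence: cutting a tree at a child [c] of its root [r] splits the ideal
   lattice into the lattice of the root-valence-1 tree made of [r] and the
   subtree of [c], times that of the remaining (smaller) tree.

   Uniqueness: by Birkhoff's representation, the non-root poset is recovered
   from its ideal lattice as the join-irreducible elements.  For a forest of
   root-valence-1 trees, each tree contributes a connected component with a
   greatest element (the child of the root); an isomorphism matches these
   components, and a tree is recovered from its non-root poset because parent
   edges are the covers and edges into the root leave the maximal elements. *)

(** * Acyclic parent functions *)

Section IterObind.
Variables (V : Type) (f : V -> option V).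

Lemma iter_obind_None k : iter k (obind f) None = None.
Proof. by elim: k => //= k ->. Qed.

Lemma iter_obind_None_le N M x :
  iter N (obind f) x = None -> N <= M -> iter M (obind f) x = None.
Proof. by move=> h /subnK <-; rewrite iterD h iter_obind_None. Qed.

Lemma exists_topmost (Q : V -> bool) N x :
  iter N (obind f) (Some x) = None -> Q x ->
  exists y, [/\ Q y, (exists k, iter k (obind f) (Some x) = Some y) &
                forall q, f y = Some q -> ~~ Q q].
Proof.
elim: N x => [//|N IH] x hN Qx.
case hx: (f x) => [q|]; last first.
  by exists x; split=> //; [exists 0 | move=> q; rewrite hx].
case Qq: (Q q); last first.
  by exists x; split=> //; [exists 0 | move=> q'; rewrite hx => -[<-]; rewrite Qq].
have hq : iter N (obind f) (Some q) = None by rewrite -hx -hN iterSr.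
have [y [Qy [k hk] hy]] := IH q hq Qq.
by exists y; split=> //; exists k.+1; rewrite iterSr /= hx.
Qed.

End IterObind.

Section Reach.
Variables (V : finType) (p : V -> option V).

Definition acyclic : Prop := exists N, forall v, iter N (obind p) (Some v) = None.

Definition reach (x y : V) : Prop := exists k, iter k (obind p) (Some x) = Some y.

Definition down (m : V) : {set V} :=
  [set v | [exists k : 'I_#|V|, iter k (obind p) (Some v) == Some m]].

(* Pigeonhole: among the #|V|+1 first iterates two coincide, so the orbit would be periodic. *)
Lemma iter_obind_None_card x N :
  iter N (obind p) (Some x) = None -> iter #|V| (obind p) (Some x) = None.
Proof.
move=> hN; case e: (iter #|V| (obind p) (Some x)) => [y|] //.
have allS : forall k, k <= #|V| -> iter k (obind p) (Some x) != None.
  by move=> k hk; apply/negP=> /eqP h; rewrite (iter_obind_None_le h hk) in e.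
pose g (k : 'I_#|V|.+1) := odflt x (iter k (obind p) (Some x)).
have : ~~ injectiveb g by apply/negP=> /injectiveP /leq_card; rewrite card_ord ltnn.
move/injectivePn => [i [j nij gij]].
have gE : forall k : 'I_#|V|.+1, iter k (obind p) (Some x) = Some (g k).
  move=> k; rewrite /g; have := allS k; rewrite -ltnS ltn_ord => /(_ isT).
  by case: (iter _ _ _).
wlog lt_ij : i j nij gij / i < j.
  move=> H; case: (ltngtP i j) => [h|h|h]; first exact: (H i j nij gij h).
    by apply: (H j i) => //; rewrite eq_sym.
  by move: nij; rewrite (val_inj h) eqxx.
have periodic m : iter (i + m * (j - i)) (obind p) (Some x) = Some (g i).
  elim: m => [|m IH]; first by rewrite mul0n addn0 gE.
  by rewrite mulSn addnCA iterD IH -gE -iterD subnK ?gE ?gij // ltnW.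
have hle : N <= i + N * (j - i).
  by apply: leq_trans (leq_addl i _); rewrite leq_pmulr // subn_gt0.
by have := periodic N; rewrite (iter_obind_None_le hN hle).
Qed.

Lemma acyclic_card : acyclic -> forall v, iter #|V| (obind p) (Some v) = None.
Proof. by case=> N hN v; apply: (@iter_obind_None_card _ N). Qed.

Lemma reach_refl x : reach x x.
Proof. by exists 0. Qed.

Lemma reach_trans x y z : reach x y -> reach y z -> reach x z.
Proof. by move=> [k hk] [l hl]; exists (l + k); rewrite iterD hk. Qed.

Lemma reach_parent x y : p x = Some y -> reach x y.
Proof. by exists 1. Qed.

Lemma reach_case x y : reach x y -> x = y \/ exists2 q, p x = Some q & reach q y.
Proof.
case=> [[|k]]; first by move=> [->]; left.
rewrite iterSr /=; case: (p x) => [q|] /= e; first by right; exists q => //; exists k.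
by rewrite iter_obind_None in e.
Qed.

Lemma reach_nonroot v m : reach v m -> p m != None -> p v != None.
Proof.
case=> [[|k]]; first by move=> [->].
by rewrite iterSr /=; case: (p v) => //= e; rewrite iter_obind_None in e.
Qed.

Hypothesis p_acyclic : acyclic.

Lemma reach_antisym x y : reach x y -> reach y x -> x = y.
Proof.
case: p_acyclic => N hN [k hk] [l hl]; case: k hk => [[]//|k] hk.
have periodic m : iter (m * (l + k.+1)) (obind p) (Some x) = Some x.
  by elim: m => [|m IH] //; rewrite mulSn iterD IH iterD hk.
have := periodic N; rewrite (@iter_obind_None_le _ _ N) ?hN //.
by rewrite leq_pmulr // addnS.
Qed.

Lemma parent_neq x : p x != Some x.
Proof.
apply/eqP=> e; case: p_acyclic => N hN.
have : iter N (obind p) (Some x) = Some x by elim: N {hN} => //= N ->; rewrite /= e.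
by rewrite hN.
Qed.

Lemma downP v m : reflect (reach v m) (v \in down m).
Proof.
rewrite inE; apply: (iffP existsP) => [[k /eqP e]|[k e]]; first by exists k.
have hk : k < #|V|.
  by rewrite ltnNge; apply/negP=> hk; rewrite (iter_obind_None_le (acyclic_card p_acyclic v) hk) in e.
by exists (Ordinal hk); rewrite e.
Qed.

Lemma reach_child_of_root r v : (forall w, p w = None -> w = r) -> p v != None ->
  exists2 c, p c = Some r & reach v c.
Proof.
move=> root_uniq nv; have [N hN] := p_acyclic.
have [y [ny ry top]] := exists_topmost (Q := fun j => p j != None) (hN v) nv.
move: ny; case ey: (p y) => [q|] // _.
by exists y => //; rewrite ey (root_uniq q (eqP (negbNE (top q ey)))).
Qed.

End Reach.

Lemma is_forest_acyclic n (x : pfun n) : is_forest x -> acyclic x.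
Proof. by move/forallP=> h; exists n => v; apply/eqP. Qed.

(** * The interval [0^, t] as a lattice of ideals *)

Definition subforest n (z t : pfun n) : Prop := forall i, z i = None \/ z i = t i.

Lemma subforest_forest n (z t : pfun n) : subforest z t -> is_forest t -> is_forest z.
Proof.
move=> hs /forallP ht; apply/forallP=> i.
have iterE k y : iter k (obind z) y = None \/ iter k (obind z) y = iter k (obind t) y.
  elim: k => [|k IH] /=; first by right.
  case: IH => ->; first by left.
  by case: (iter k (obind t) y) => [v|] /=; [exact: hs | left].
by case: (iterE n (Some i)) => ->.
Qed.

Section NapOrder.
Variable n : nat.
Implicit Types x y z t : pfun n.

Lemma nap_cover_mono x y i q : nap_cover x y -> x i = Some q -> y i = Some q.
Proof.
move=> /andP[_ /existsP[r1 /existsP[r2 /and4P[_ hr1 _ /eqP->]]]] hi.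
by rewrite ffunE; case: eqP => [e|//]; subst; rewrite (eqP hr1) in hi.
Qed.

(* A cover only adds an edge leaving a root, so edges into non-roots already exist. *)
Lemma nap_cover_child x y i q : nap_cover x y -> x q != None -> y i = Some q -> x i = Some q.
Proof.
move=> /andP[_ /existsP[r1 /existsP[r2 /and4P[_ hr1 hr2 /eqP->]]]] hq.
by rewrite ffunE; case: eqP => [e [e2]|//]; subst; rewrite (eqP hr2) in hq.
Qed.

Lemma nap_le_mono x y i q : nap_le x y -> x i = Some q -> y i = Some q.
Proof.
case/connectP=> s; elim: s x => [|z s IH] x /=; first by move=> _ ->.
by move=> /andP[c pth] e h; apply: (IH z pth e); exact: nap_cover_mono c h.
Qed.

Lemma nap_le_child x y i q : nap_le x y -> x q != None -> y i = Some q -> x i = Some q.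
Proof.
case/connectP=> s; elim: s x => [|z s IH] x /=; first by move=> _ -> _ ->.
move=> /andP[c pth] e hq hy.
have hz : z q != None by move: hq; case ex: (x q) => [a|] // _; rewrite (nap_cover_mono c ex).
exact: (nap_cover_child c hq (IH z pth e hz hy)).
Qed.

Lemma nap_le_subforest z t : nap_le z t -> subforest z t.
Proof. by move=> h i; case e: (z i) => [q|]; [right; rewrite (nap_le_mono h e) | left]. Qed.

(* Induction on the edges of [z'] missing in [z]: a topmost missing edge
   leaves a root of [z'], so [z'] covers [z'] minus that edge. *)
Lemma nap_le_of_subforest t z z' : is_forest t -> subforest z t ->
  (forall i q, t i = Some q -> z q != None -> z i != None) ->
  subforest z' t -> (forall i, z i != None -> z' i != None) -> nap_le z z'.
Proof.
move=> tf hz hcl.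
have [k] := ubnP #|[set i | (z i == None) && (z' i != None)]|.
elim: k z' => // k IH z' hk hz' hinc.
set D := [set i | _] in hk.
case: (set_0Vmem D) => [D0 | [i iD]].
  suff -> : z' = z by exact: connect0.
  apply/ffunP=> j; case: (hz j) => hj.
    case: (z' j =P None) => [->|/eqP nz]; first by rewrite hj.
    have : j \in D by rewrite inE hj eqxx nz.
    by rewrite D0 inE.
  case: (hz' j) => hj'; last by rewrite hj hj'.
  by move: (hinc j); rewrite hj' hj; case: (t j) hj => // a _; move/(_ isT).
have tfi : iter n (obind t) (Some i) = None by move/forallP: tf => /(_ i) /eqP.
have [i0 [Di0 _ htop]] := exists_topmost (Q := fun j => j \in D) tfi iD.
move: Di0; rewrite inE => /andP[/eqP zi0 z'i0].
have [q tq] : exists q, t i0 = Some q.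
  by case: (hz' i0) z'i0 => ->; [rewrite eqxx | case: (t i0) => // a; exists a].
have z'i0q : z' i0 = Some q by case: (hz' i0) z'i0 => ->; rewrite ?eqxx ?tq.
have z'q : z' q = None.
  move: (htop q tq); rewrite inE negb_and negbK => /orP[zq|/eqP //].
  by move: (hcl i0 q tq zq); rewrite zi0.
have i0q : i0 != q by apply/eqP=> e; subst; rewrite z'q in z'i0q.
pose z'' : pfun n := [ffun j => if j == i0 then None else z' j].
have hz'' : subforest z'' t.
  by move=> j; rewrite ffunE; case: eqP => _; [left | exact: hz'].
apply: (@connect_trans _ _ z''); last first.
  apply: connect1; apply/andP; split; first exact: subforest_forest hz'' tf.
  apply/existsP; exists i0; apply/existsP; exists q.
  have qi0 : (q == i0) = false by rewrite eq_sym (negbTE i0q).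
  rewrite i0q !ffunE eqxx qi0 z'q eqxx /=.
  by apply/eqP/ffunP=> j; rewrite !ffunE; case: eqP => [->|].
apply: IH => //.
- rewrite -ltnS; apply: leq_trans hk.
  rewrite (cardsD1 i0 D) inE zi0 eqxx z'i0 add1n ltnS; apply: subset_leq_card.
  by apply/subsetP=> j; rewrite !inE ffunE; case: (j =P i0) => [_|_ /=]; rewrite ?andbF.
- move=> j nz; rewrite ffunE; case: (j =P i0) => [e|_]; last exact: hinc.
  by subst; rewrite zi0 in nz.
Qed.

End NapOrder.

(** * Isomorphisms of finite posets *)

Lemma iso_of (P Q : fposet) (f : fp_car P -> fp_car Q) (g : fp_car Q -> fp_car P) :
  cancel f g -> cancel g f -> (forall x y, fp_le x y = fp_le (f x) (f y)) ->
  fposet_iso P Q.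
Proof. by move=> fg gf h; exists f; split=> //; exact: Bijective fg gf. Qed.

Lemma iso_inj_surj (P Q : fposet) (f : fp_car P -> fp_car Q) :
  injective f -> (forall y, exists x, f x = y) ->
  (forall x y, fp_le x y = fp_le (f x) (f y)) -> fposet_iso P Q.
Proof.
move=> inj surj hle; exists f; split=> //; apply: (inj_card_bij inj).
rewrite -(card_codom inj); apply: subset_leq_card; apply/subsetP=> y _.
by have [x <-] := surj y; exact: codom_f.
Qed.

Lemma iso_refl P : fposet_iso P P.
Proof. by apply: (@iso_of P P id id). Qed.

Lemma iso_sym P Q : fposet_iso P Q -> fposet_iso Q P.
Proof. by case=> f [[g fg gf] h]; apply: (iso_of gf fg) => x y; rewrite h !gf. Qed.

Lemma iso_trans P Q R : fposet_iso P Q -> fposet_iso Q R -> fposet_iso P R.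
Proof.
case=> f [[f' ff' f'f] hf]; case=> g [[g' gg' g'g] hg].
by apply: (@iso_of P R (g \o f) (f' \o g')) => [x|x|x y] /=; rewrite ?gg' ?ff' ?g'g ?f'f ?hf ?hg.
Qed.

Lemma iso_prod P P' Q Q' : fposet_iso P P' -> fposet_iso Q Q' ->
  fposet_iso (fposet_prod P Q) (fposet_prod P' Q').
Proof.
case=> f [[f' ff' f'f] hf]; case=> g [[g' gg' g'g] hg].
apply: (@iso_of (fposet_prod P Q) (fposet_prod P' Q')
  (fun a => (f a.1, g a.2)) (fun a => (f' a.1, g' a.2))).
- by case=> a b /=; rewrite ff' gg'.
- by case=> a b /=; rewrite f'f g'g.
- by case=> a b [c d] /=; rewrite hf hg.
Qed.

Lemma iso_unit_prod P : fposet_iso P (fposet_prod fposet_unit P).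
Proof. by apply: (@iso_of P (fposet_prod fposet_unit P) (pair tt) snd) => // -[[] a]. Qed.

Lemma iso_prodA P Q R :
  fposet_iso (fposet_prod (fposet_prod P Q) R) (fposet_prod P (fposet_prod Q R)).
Proof.
apply: (@iso_of (fposet_prod (fposet_prod P Q) R) (fposet_prod P (fposet_prod Q R))
   (fun a => (a.1.1, (a.1.2, a.2))) (fun a => ((a.1, a.2.1), a.2.2))).
- by case=> [[a b] c].
- by case=> [a [b c]].
- by case=> [[a b] c] [[a' b'] c'] /=; rewrite andbA.
Qed.

Lemma prod_ival_cat ts ts' :
  fposet_iso (prod_ival (ts ++ ts')) (fposet_prod (prod_ival ts) (prod_ival ts')).
Proof.
elim: ts => [|t ts IH] /=; first exact: iso_unit_prod.
exact: iso_trans (iso_prod (iso_refl _) IH) (iso_sym (iso_prodA _ _ _)).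
Qed.

Definition fposet_sub (P : fposet) (A : pred (fp_car P)) : fposet :=
  @FPoset {x : fp_car P | A x} (fun a b => fp_le (val a) (val b)).

Lemma iso_sub (P Q : fposet) (A : pred (fp_car P)) (B : pred (fp_car Q))
    (f : fp_car P -> fp_car Q) :
  bijective f -> (forall x y, fp_le x y = fp_le (f x) (f y)) -> (forall x, A x = B (f x)) ->
  fposet_iso (fposet_sub A) (fposet_sub B).
Proof.
move=> [g fg gf] hf hAB.
have Bf (a : fp_car (fposet_sub A)) : B (f (val a)) by rewrite -hAB (valP a).
have Ag (b : fp_car (fposet_sub B)) : A (g (val b)) by rewrite hAB gf (valP b).
apply: (@iso_of (fposet_sub A) (fposet_sub B) 
  (fun a => exist (fun y => B y) _ (Bf a)) (fun b => exist (fun x => A x) _ (Ag b))).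
- by move=> a; apply: val_inj; rewrite /= fg.
- by move=> b; apply: val_inj; rewrite /= gf.
- by move=> a b /=; rewrite hf.
Qed.

(* Order ideals of the non-root vertices ordered by descent; a vertex stands
   for its edge to the parent. *)Section Ideals.
Variables (V : finType) (p : V -> option V).

Definition is_ideal (S : {set V}) : bool :=
  [forall i, (i \in S) ==> (p i != None)] &&
  [forall i, forall q, (p i == Some q) ==> (q \in S) ==> (i \in S)].

Definition ideals : fposet :=
  @FPoset {S : {set V} | is_ideal S} (fun a b => val a \subset val b).

Lemma is_idealP (S : {set V}) :
  reflect ((forall i, i \in S -> p i != None) /\
           (forall i q, p i = Some q -> q \in S -> i \in S)) (is_ideal S).
Proof.
apply: (iffP andP) => [[/forallP h1 /forallP h2]|[h1 h2]]; split.
- by move=> i; move/implyP: (h1 i).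
- by move=> i q e; move/forallP: (h2 i) => /(_ q) /implyP; rewrite e eqxx => /(_ isT) /implyP.
- by apply/forallP=> i; apply/implyP; exact: h1.
- by apply/forallP=> i; apply/forallP=> q; apply/implyP=> /eqP e; apply/implyP; exact: h2.
Qed.

Lemma ideal_reach (S : {set V}) v m : is_ideal S -> reach p v m -> m \in S -> v \in S.
Proof.
move=> /is_idealP [_ h2] [k]; elim: k v => [|k IH] v; first by case=> ->.
rewrite iterSr /=; case e: (p v) => [q|] /=; last by rewrite iter_obind_None.
by move=> hk mS; exact: h2 e (IH q hk mS).
Qed.

Lemma ideals_rootless : (forall v, p v = None) -> fposet_iso fposet_unit ideals.
Proof.
move=> h.
have i0 : is_ideal set0 by apply/is_idealP; split=> [i|i q]; rewrite ?inE // h.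
apply: (@iso_of fposet_unit ideals (fun _ => exist is_ideal _ i0) (fun _ => tt)) => //.
- by case.
- case=> S hS; apply: val_inj => /=; apply/setP=> x; rewrite inE.
  move/is_idealP: hS => [hS _].
  by apply/esym/negbTE; apply/negP=> /hS; rewrite h.
- by move=> x y /=; rewrite sub0set.
Qed.

End Ideals.

Lemma ival_ideals (t : rtree) : is_forest (rt_par t) -> fposet_iso (ival t) (ideals (rt_par t)).
Proof.
move=> ht.
have to_ideal (z : ival_car t) : is_ideal (rt_par t) [set i | sval z i != None].
  case: z => z /= /andP[_ h]; apply/is_idealP; split=> [i|i q e].
    by rewrite inE; case: (nap_le_subforest h i) => ->; rewrite ?eqxx.
  by rewrite !inE => zq; rewrite (nap_le_child h zq e).
pose of_set (S : {set 'I_(rt_n t)}) : pfun (rt_n t) :=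
  [ffun i => if i \in S then rt_par t i else None].
have of_ideal (S : fp_car (ideals (rt_par t))) :
    nap_le (nap0 (rt_n t)) (of_set (val S)) && nap_le (of_set (val S)) (rt_par t).
  case: S => S /= /is_idealP [h1 h2].
  have zs : subforest (of_set S) (rt_par t).
    by move=> i; rewrite ffunE; case: ifP; [right|left].
  apply/andP; split.
  - apply: nap_le_of_subforest ht _ _ zs _ => [i|i q _|i]; rewrite ffunE ?eqxx //; by left.
  - apply: nap_le_of_subforest ht zs _ _ _ => [i q e|i|i] //.
    + by rewrite !ffunE; case: ifP => // qS _; rewrite (h2 i q e qS) e.
    + by right.
    + by rewrite ffunE; case: ifP.
apply: (@iso_of (ival t) (ideals (rt_par t)) (fun z => exist (is_ideal _) _ (to_ideal z))
  (fun S => exist (fun z => nap_le (nap0 _) z && nap_le z (rt_par t)) _ (of_ideal S))).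
- case=> z hz; apply: val_inj => /=; apply/ffunP=> i; rewrite ffunE inE.
  move/andP: hz => [_ /nap_le_subforest h].
  by case: (h i) => ->; rewrite ?eqxx //; case: (rt_par t i).
- case=> S hS; apply: val_inj => /=; apply/setP=> i; rewrite inE ffunE.
  by case: ifP => // iS; move/is_idealP: hS => [h1 _]; exact: h1.
- case=> z hz [z' hz'] /=; move/andP: hz => [_ h]; move/andP: hz' => [_ h'].
  apply/idP/subsetP => [le i|sub].
    by rewrite !inE; case e: (z i) => [q|] // _; rewrite (nap_le_mono le e).
  apply: nap_le_of_subforest ht (nap_le_subforest h) _ (nap_le_subforest h') _.
    by move=> i q e zq; rewrite (nap_le_child h zq e).
  by move=> i nz; have := sub i; rewrite !inE; apply.
Qed.

Lemma ideals_map (W V : finType) (pW : W -> option W) (pV : V -> option V) (g : W -> V) :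
  (forall x, pV (g x) = omap g (pW x)) ->
  (forall x y, pW x != None -> pW y != None -> g x = g y -> x = y) ->
  (forall v, pV v != None -> exists x, g x = v) ->
  fposet_iso (ideals pW) (ideals pV).
Proof.
move=> hpar hinj hsurj.
have nrg x : (pV (g x) != None) = (pW x != None) by rewrite hpar; case: (pW x).
have Fp (S : fp_car (ideals pW)) : is_ideal pV (g @: sval S).
  case: S => S /= /is_idealP [h1 h2]; apply/is_idealP; split.
    by move=> i /imsetP [x xS ->]; rewrite nrg; exact: h1.
  move=> i q e /imsetP [x xS ex].
  have [y gy] : exists y, g y = i by apply: hsurj; rewrite e.
  move: e; rewrite -gy hpar; case ey: (pW y) => [r|] //= [gr].
  have nr : pW r != None by rewrite -nrg gr ex nrg; exact: h1.
  have rx : r = x by apply: hinj => //; [exact: h1 | rewrite gr].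
  by subst r; rewrite imset_f // (h2 y x ey xS).
have Gp (S : fp_car (ideals pV)) : is_ideal pW [set x | (pW x != None) && (g x \in sval S)].
  case: S => S /= /is_idealP [h1 h2]; apply/is_idealP; split.
    by move=> i; rewrite inE => /andP [].
  move=> i q e; rewrite !inE => /andP [_ gq]; rewrite e /=.
  by apply: (h2 _ (g q)) => //; rewrite hpar e.
apply: (@iso_of (ideals pW) (ideals pV) (fun S => exist (is_ideal _) _ (Fp S))
  (fun S => exist (is_ideal _) _ (Gp S))).
- case=> S hS; apply: val_inj => /=; apply/setP=> x; rewrite inE.
  move/is_idealP: (hS) => [h1 _].
  apply/andP/idP => [[nx /imsetP [y yS gxy]]|xS].
    by rewrite (hinj x y nx (h1 _ yS) gxy).
  by split; [exact: h1 | exact: imset_f].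
- case=> S hS; apply: val_inj => /=; apply/setP=> v; move/is_idealP: hS => [h1 _].
  apply/imsetP/idP => [[x]|vS]; first by rewrite inE => /andP [_ h] ->.
  have [x gx] := hsurj v (h1 _ vS); exists x => //; rewrite inE gx vS andbT.
  by rewrite -nrg gx; exact: h1.
- case=> S hS [T hT] /=; apply/idP/idP; first exact: imsetS.
  move/is_idealP: hS => [h1 _]; move/is_idealP: hT => [k1 _].
  move=> /subsetP sub; apply/subsetP=> x xS.
  have /imsetP [y yT gxy] := sub _ (imset_f g xS).
  by rewrite (hinj x y (h1 _ xS) (k1 _ yT) gxy).
Qed.

Definition sum_par (V1 V2 : finType) (p1 : V1 -> option V1) (p2 : V2 -> option V2)
  (v : V1 + V2) : option (V1 + V2) :=
  match v with inl x => omap inl (p1 x) | inr y => omap inr (p2 y) end.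

Lemma ideals_sum (V1 V2 : finType) (p1 : V1 -> option V1) (p2 : V2 -> option V2) :
  fposet_iso (fposet_prod (ideals p1) (ideals p2)) (ideals (sum_par p1 p2)).
Proof.
have Fp (S : fp_car (ideals p1) * fp_car (ideals p2)) : is_ideal (sum_par p1 p2)
    [set v | match v with inl x => x \in sval S.1 | inr y => y \in sval S.2 end].
  case: S => [[S1 h1] [S2 h2]] /=; move/is_idealP: h1 => [a1 b1]; move/is_idealP: h2 => [a2 b2].
  apply/is_idealP; split.
    by case=> [x|y]; rewrite inE /= => h; [move: (a1 _ h) | move: (a2 _ h)];
      case: (_ x) || case: (_ y).
  case=> [x|y] [q|q]; rewrite !inE /=.
  - by case e: (p1 x) => [a|] //= [<-]; exact: b1 e.
  - by case: (p1 x).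
  - by case: (p2 y).
  - by case e: (p2 y) => [a|] //= [<-]; exact: b2 e.
have Gp1 (S : fp_car (ideals (sum_par p1 p2))) : is_ideal p1 [set x | inl x \in sval S].
  case: S => S /= /is_idealP [a b]; apply/is_idealP; split=> [i|i q e]; rewrite !inE /=.
    by move/a => /=; case: (p1 i).
  by apply: b; rewrite /= e.
have Gp2 (S : fp_car (ideals (sum_par p1 p2))) : is_ideal p2 [set x | inr x \in sval S].
  case: S => S /= /is_idealP [a b]; apply/is_idealP; split=> [i|i q e]; rewrite !inE /=.
    by move/a => /=; case: (p2 i).
  by apply: b; rewrite /= e.
apply: (@iso_of (fposet_prod (ideals p1) (ideals p2)) (ideals (sum_par p1 p2))
  (fun S => exist (is_ideal _) _ (Fp S))
  (fun S => (exist (is_ideal _) _ (Gp1 S), exist (is_ideal _) _ (Gp2 S)))).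
- by case=> [[S1 h1] [S2 h2]]; congr pair; apply: val_inj; apply/setP=> x; rewrite !inE.
- by case=> S h; apply: val_inj; apply/setP=> [[x|y]]; rewrite !inE.
- case=> [[S1 h1] [S2 h2]] [[T1 k1] [T2 k2]] /=.
  apply/andP/subsetP => [[/subsetP s1 /subsetP s2] [x|y]|s]; rewrite ?inE.
  + exact: s1.
  + exact: s2.
  + by split; apply/subsetP=> z zS; [have := s (inl z) | have := s (inr z)]; rewrite !inE; apply.
Qed.

Definition tree_vtx (us : seq rtree) (i : 'I_(size us)) : finType :=
  'I_(rt_n (nth dummy_tree us i)).

Definition seq_vtx (us : seq rtree) : finType := {i : 'I_(size us) & tree_vtx i}.

Definition seq_par (us : seq rtree) (v : seq_vtx us) : option (seq_vtx us) :=
  omap (Tagged (@tree_vtx us)) (rt_par (nth dummy_tree us (tag v)) (tagged v)).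

Definition seq_vtx_cons (t : rtree) (ts : seq rtree) (w : 'I_(rt_n t) + seq_vtx ts) :
    seq_vtx (t :: ts) :=
  match w with
  | inl x => Tagged (@tree_vtx (t :: ts)) (x : tree_vtx (ord0 : 'I_(size (t :: ts))))
  | inr v => Tagged (@tree_vtx (t :: ts))
               (tagged v : tree_vtx (lift ord0 (tag v) : 'I_(size (t :: ts))))
  end.

Lemma prod_ival_ideals (us : seq rtree) : all (fun t => is_forest (rt_par t)) us ->
  fposet_iso (prod_ival us) (ideals (@seq_par us)).
Proof.
elim: us => [|t ts IH] /=; first by move=> _; apply: ideals_rootless => -[[]].
move=> /andP [ht hts].
apply: iso_trans (iso_prod (ival_ideals ht) (IH hts)) _.
apply: iso_trans (ideals_sum _ _) _.
apply: (@ideals_map _ _ _ _ (@seq_vtx_cons t ts)).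
- by case=> [x|[i y]] /=; rewrite /seq_par /=; [case: (rt_par t x) | case: (rt_par _ y)].
- case=> [x|[i y]] [x'|[i' y']] _ _ /= e.
  + by rewrite (eq_from_Tagged e).
  + by have := congr1 (fun v => val (tag v)) e.
  + by have := congr1 (fun v => val (tag v)) e.
  + have ii' : i = i' by apply: val_inj; have := congr1 (fun v => val (tag v)) e => /= -[].
    by subst i'; rewrite (eq_from_Tagged e).
- case=> i y _; case: (unliftP ord0 i) => [j|] e; subst i.
    by exists (inr (Tagged (@tree_vtx ts) (y : tree_vtx j))).
  by exists (inl y).
Qed.

(** * Factorisation into trees of root-valence 1 *)

Definition rtree_of (V : finType) (p : V -> option V) : rtree :=
  @RTree #|V| [ffun k => omap enum_rank (p (enum_val k))].

Section RtreeOf.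
Variables (V : finType) (p : V -> option V).

Lemma rtree_of_forest : acyclic p -> is_forest (rt_par (rtree_of p)).
Proof.
move=> /acyclic_card h; apply/forallP=> i /=.
have iterE k : iter k (obind (rt_par (rtree_of p))) (Some i) =
               omap enum_rank (iter k (obind p) (Some (enum_val i))).
  elim: k => [|k IH] /=; first by rewrite enum_valK.
  by rewrite IH; case: (iter k _ _) => //= v; rewrite ffunE enum_rankK.
by rewrite iterE h.
Qed.

Lemma card_rtree_of_fiber (o : option V) :
  #|[set i | rt_par (rtree_of p) i == omap enum_rank o]| = #|[set v | p v == o]|.
Proof.
suff -> : [set i | rt_par (rtree_of p) i == omap enum_rank o] = enum_rank @: [set v | p v == o].
  by rewrite card_imset //; exact: enum_rank_inj.
apply/setP=> i; rewrite inE ffunE; apply/idP/imsetP => [/eqP e|[v]].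
  exists (enum_val i); last by rewrite enum_valK.
  rewrite inE; apply/eqP; case: (p (enum_val i)) e; case: o => //.
  by move=> a b [/enum_rank_inj ->].
by rewrite inE => /eqP <- ->; rewrite enum_rankK.
Qed.

Lemma ideals_rtree_of : fposet_iso (ideals (rt_par (rtree_of p))) (ideals p).
Proof.
apply: (@ideals_map _ _ _ _ enum_val).
- by move=> x /=; rewrite ffunE; case: (p (enum_val x)) => //= v; rewrite enum_rankK.
- by move=> x y _ _; exact: enum_val_inj.
- by move=> v _; exists (enum_rank v); rewrite enum_rankK.
Qed.

Lemma rtree_of_is_rtree :
  acyclic p -> #|[set v | p v == None]| = 1 -> is_rtree (rtree_of p).
Proof.
move=> hf hr; rewrite /is_rtree rtree_of_forest //=.
by rewrite -[None](@erefl _ (omap enum_rank None)) card_rtree_of_fiber hr.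
Qed.

Lemma rtree_of_valence1 r :
  p r = None -> #|[set v | p v == Some r]| = 1 -> root_valence1 (rtree_of p).
Proof.
move=> hr hc; apply/existsP; exists (enum_rank r).
rewrite /= ffunE enum_rankK hr eqxx /=.
by rewrite -[Some (enum_rank r)](@erefl _ (omap enum_rank (Some r))) card_rtree_of_fiber hc.
Qed.

End RtreeOf.

Definition parent_closed (V : finType) (p : V -> option V) (B : {set V}) : Prop :=
  forall x q, x \in B -> p x = Some q -> q \in B.

Definition restrict (V : finType) (p : V -> option V) (B : {set V}) (x : {v | v \in B}) :
  option {v | v \in B} := obind insub (p (val x)).
Arguments restrict [V] p B x.

Section Restrict.
Variables (V : finType) (p : V -> option V) (B : {set V}).
Hypothesis B_closed : parent_closed p B.

Lemma restrictE (x : {v | v \in B}) : omap val (restrict p B x) = p (val x).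
Proof.
rewrite /restrict; case e: (p (val x)) => [q|] //=.
by case: insubP => [u _ <- //|]; rewrite (B_closed (valP x) e).
Qed.

Lemma restrict_acyclic : acyclic p -> acyclic (restrict p B).
Proof.
case=> N hN; exists N => x.
have iterE k : omap val (iter k (obind (restrict p B)) (Some x)) = iter k (obind p) (Some (val x)).
  elim: k => [//|k IH] /=; rewrite -IH.
  by case: (iter k _ _) => //= y; rewrite restrictE.
by move: (iterE N); rewrite hN; case: (iter N _ _).
Qed.

Lemma card_restrict_fiber (o : option {v | v \in B}) :
  #|[set x | restrict p B x == o]| = #|[set v in B | p v == omap val o]|.
Proof.
suff -> : [set v in B | p v == omap val o] = val @: [set x | restrict p B x == o].
  by rewrite card_imset //; exact: val_inj.
apply/setP=> v; rewrite !inE; apply/andP/imsetP => [[vB /eqP e]|[x]].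
  exists (Sub v vB); rewrite // inE; apply/eqP/(inj_omap val_inj).
  by rewrite restrictE /= e.
by rewrite inE => /eqP <- ->; rewrite -restrictE (valP x) eqxx.
Qed.

End Restrict.

Lemma ideals_split (V : finType) (p : V -> option V) (B1 B2 : {set V}) :
  parent_closed p B1 -> parent_closed p B2 ->
  (forall v, p v != None -> (v \in B1) = (v \notin B2)) ->
  fposet_iso (ideals p) (fposet_prod (ideals (restrict p B1)) (ideals (restrict p B2))).
Proof.
move=> cl1 cl2 part; apply/iso_sym/(iso_trans (ideals_sum _ _)).
apply: (@ideals_map _ _ _ _ (fun w => match w with inl x => val x | inr y => val y end)).
- by case=> [x|y] /=; [rewrite -restrictE //; case: (restrict p B1 x)
                      | rewrite -restrictE //; case: (restrict p B2 y)].
- have nonroot (B : {set V}) (cl : parent_closed p B) (T : eqType) (f : _ -> T) x :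
      omap f (restrict p B x) != None -> p (val x) != None.
    by rewrite -(restrictE cl x); case: (restrict p B x).
  case=> [x|y] [x'|y'] /= n n' e.
  + by congr inl; exact: val_inj.
  + have {}e : val x = val y' := e.
    by have := part _ (nonroot _ cl1 _ _ _ n); rewrite (valP x) e (valP y').
  + have {}e : val y = val x' := e.
    by have := part _ (nonroot _ cl1 _ _ _ n'); rewrite (valP x') -e (valP y).
  + by congr inr; exact: val_inj.
- move=> v nv; case vB: (v \in B1).
    by exists (inl (Sub v vB)).
  have vB2 : v \in B2 by move: (part v nv); rewrite vB => /esym/negbFE.
  by exists (inr (Sub v vB2)).
Qed.

Lemma card_fiber_eq1 (V : finType) (p : V -> option V) (B : {set V}) o v0 :
  v0 \in B -> p v0 = o -> (forall v, v \in B -> p v = o -> v = v0) ->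
  #|[set v in B | p v == o]| = 1.
Proof.
move=> v0B pv0 uniq; apply/eqP/cards1P; exists v0; apply/setP=> v; rewrite !inE.
apply/andP/eqP => [[vB /eqP /(uniq v vB)]|->] //; by rewrite v0B pv0.
Qed.

(* Cutting a tree at a child [c] of its root [r]: the subtree of [c] together
   with [r] is a tree of root-valence 1, and the rest is a smaller tree. *)
Section SplitAtChild.
Variables (V : finType) (p : V -> option V) (r c : V).
Hypotheses (p_acyclic : acyclic p) (r_root : p r = None)
  (root_uniq : forall v, p v = None -> v = r) (c_child : p c = Some r).

Let B1 := r |: down p c.
Let B2 := ~: down p c.

Lemma root_notin_down : r \notin down p c.
Proof.
apply/(downP p_acyclic) => /reach_case [rc|[q]]; last by rewrite r_root.
by move: (parent_neq p_acyclic c); rewrite c_child rc eqxx.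
Qed.

Lemma root_down_child_uniq v : v \in B1 -> p v = Some r -> v = c.
Proof.
rewrite in_setU1 => /orP [/eqP -> |/(downP p_acyclic) /reach_case [//|[q ->]] hq [qr]].
  by rewrite r_root.
by move: root_notin_down; rewrite -qr => /(downP p_acyclic).
Qed.

Lemma parent_closed_root_down : parent_closed p B1.
Proof.
move=> x q; rewrite in_setU1 => /orP [/eqP -> |/(downP p_acyclic) xc]; first by rewrite r_root.
case: (reach_case xc) => [-> |[q' -> qc]]; rewrite ?c_child => -[<-]; first by rewrite setU11.
by rewrite in_setU1; apply/orP; right; apply/(downP p_acyclic).
Qed.

Lemma parent_closed_compl_down : parent_closed p B2.
Proof.
move=> x q; rewrite !in_setC => xc e; apply: contra xc => /(downP p_acyclic) qc.
by apply/(downP p_acyclic); exact: reach_trans (reach_parent e) qc.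
Qed.

Lemma nonroot_down_partition v : p v != None -> (v \in B1) = (v \notin B2).
Proof.
move=> nv; rewrite in_setU1 in_setC negbK.
by case: (v =P r) => [vr|]; [move: nv; rewrite vr r_root | ].
Qed.

Lemma ideals_split_at_child : exists t1 t2,
  [/\ is_rtree t1, root_valence1 t1, is_rtree t2, rt_n t2 < #|V| &
      fposet_iso (ideals p) (fposet_prod (ival t1) (ival t2))].
Proof.
have rB1 : r \in B1 by rewrite setU11.
have rB2 : r \in B2 by rewrite in_setC root_notin_down.
have c_down : c \in down p c by apply/(downP p_acyclic)/reach_refl.
have cB1 : c \in B1 by rewrite in_setU1 c_down orbT.
have acyclic1 := restrict_acyclic parent_closed_root_down p_acyclic.
have acyclic2 := restrict_acyclic parent_closed_compl_down p_acyclic.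
have root_in (B : {set V}) : r \in B -> #|[set v in B | p v == None]| = 1.
  by move=> rB; apply: card_fiber_eq1 rB r_root _ => v _ /root_uniq.
exists (rtree_of (restrict p B1)), (rtree_of (restrict p B2)); split.
- by apply: (rtree_of_is_rtree acyclic1); rewrite (card_restrict_fiber parent_closed_root_down) root_in.
- apply: (@rtree_of_valence1 _ _ (Sub r rB1)).
    by apply: (inj_omap val_inj); rewrite (restrictE parent_closed_root_down) r_root.
  rewrite (card_restrict_fiber parent_closed_root_down) /=; apply: card_fiber_eq1 cB1 c_child _.
  exact: root_down_child_uniq.
- apply: (rtree_of_is_rtree acyclic2).
  by rewrite (card_restrict_fiber parent_closed_compl_down) root_in.
- rewrite /= card_sig.
  have -> : #|[pred x in B2]| = #|B2| by apply: eq_card.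
  rewrite cardsCs setCK ltn_subrL.
  by apply/andP; split; apply/card_gt0P; exists c.
- have := ideals_split parent_closed_root_down parent_closed_compl_down nonroot_down_partition.
  move/iso_trans; apply; apply: iso_prod.
  + exact: iso_sym (iso_trans (ival_ideals (rtree_of_forest acyclic1)) (ideals_rtree_of _)).
  + exact: iso_sym (iso_trans (ival_ideals (rtree_of_forest acyclic2)) (ideals_rtree_of _)).
Qed.

End SplitAtChild.

Lemma ival_valence1_factor (t : rtree) : is_rtree t ->
  exists us, [/\ all is_rtree us, all root_valence1 us & fposet_iso (ival t) (prod_ival us)].
Proof.
have [N] := ubnP (rt_n t); elim: N t => // N IH t hN /andP [hf /cards1P [r er]].
have rootE v : (rt_par t v == None) = (v == r) by rewrite -in_set1 -er inE.
have r_root : rt_par t r = None by apply/eqP; rewrite rootE.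
have root_uniq v : rt_par t v = None -> v = r by move/eqP; rewrite rootE => /eqP.
have acyclic_t := is_forest_acyclic hf.
case: (pickP (fun c => rt_par t c == Some r)) => [c /eqP c_child | no_child].
  have [t1 [t2 [h1 v1 h2 lt iso]]] := ideals_split_at_child acyclic_t r_root root_uniq c_child.
  rewrite card_ord in lt.
  have [us2 [a2 b2 iso2]] := IH t2 (leq_trans lt hN) h2.
  exists (t1 :: us2); split; rewrite /= ?h1 ?v1 //.
  exact: iso_trans (ival_ideals hf) (iso_trans iso (iso_prod (iso_refl _) iso2)).
exists [::]; split=> //=.
apply: iso_trans (ival_ideals hf) (iso_sym (ideals_rootless _)) => v.
apply/eqP/contraT => /(reach_child_of_root acyclic_t root_uniq) [c c_child _].
by move: (no_child c); rewrite /= c_child eqxx.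
Qed.

Lemma prod_ival_valence1_factor (ts : seq rtree) : all is_rtree ts ->
  exists us, [/\ all is_rtree us, all root_valence1 us & fposet_iso (prod_ival ts) (prod_ival us)].
Proof.
elim: ts => [|t ts IH] /=; first by exists [::]; split=> //; exact: iso_refl.
move=> /andP [/ival_valence1_factor [u [a b i]] /IH [us [a' b' i']]].
exists (u ++ us); rewrite !all_cat a b a' b'; split=> //.
exact: iso_trans (iso_prod i i') (iso_sym (prod_ival_cat _ _)).
Qed.

(** * Recovering the non-root poset *)

Definition lcov (P : fposet) (x y : fp_car P) : bool :=
  [&& fp_le y x, y != x &
      [forall z, (fp_le y z && fp_le z x) ==> (z == y) || (z == x)]].

(* In a finite distributive lattice the join-irreducible elements are those
   with exactly one lower cover. *)
Definition join_irr (P : fposet) (x : fp_car P) : bool := #|[set y | lcov x y]| == 1.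

Definition join_irreducibles (P : fposet) : fposet := fposet_sub (@join_irr P).

Lemma iso_join_irreducibles P Q :
  fposet_iso P Q -> fposet_iso (join_irreducibles P) (join_irreducibles Q).
Proof.
case=> f [fbij hf]; apply: (iso_sub fbij hf) => x.
have finj := bij_inj fbij; have [g fg gf] := fbij.
have lcovE y : lcov (f x) (f y) = lcov x y.
  rewrite /lcov -!hf (inj_eq finj); congr [&& _, _ & _].
  apply/forallP/forallP => h z; first by have := h (f z); rewrite -!hf !(inj_eq finj).
  by have := h (g z); rewrite -[z]gf -!hf !(inj_eq finj) !gf.
rewrite /join_irr; suff -> : [set y | lcov (f x) y] = f @: [set y | lcov x y] by rewrite card_imset.
by apply/setP=> y; rewrite inE -[y]gf lcovE mem_imset ?inE.
Qed.

Definition nonroots (V : finType) (p : V -> option V) : fposet :=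
  @FPoset {v : V | p v != None} (fun a b => val a \in down p (val b)).

Section IdealJoinIrreducibles.
Variables (V : finType) (p : V -> option V).
Hypothesis p_acyclic : acyclic p.

Definition ideal_max (S : {set V}) (m : V) : bool :=
  (m \in S) && (if p m is Some q then q \notin S else true).

Lemma ideal_remove_max (S : {set V}) m :
  is_ideal p S -> ideal_max S m -> is_ideal p (S :\ m).
Proof.
move=> /is_idealP [h1 h2] /andP [mS tm]; apply/is_idealP; split.
  by move=> i; rewrite !inE => /andP [_ /h1].
move=> i q e; rewrite !inE => /andP [qm qS]; rewrite (h2 i q e qS) andbT.
by apply/eqP=> im; subst i; rewrite e qS in tm.
Qed.

Lemma exists_ideal_max (S T : {set V}) x :
  is_ideal p T -> x \in S :\: T -> exists2 m, ideal_max (S :\: T) m & m \in S :\: T.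
Proof.
move=> /is_idealP [_ hT] xST; have [N hN] := p_acyclic.
have [y [yST _ hy]] := exists_topmost (Q := fun v => v \in S :\: T) (hN x) xST.
exists y => //; rewrite /ideal_max yST; case e: (p y) => [q|] //; exact: hy.
Qed.

Lemma lcov_idealsP (S T : fp_car (ideals p)) :
  reflect (exists2 m, ideal_max (val S) m & val T = val S :\ m) (lcov S T).
Proof.
case: S T => [S hS] [T hT] /=; apply: (iffP and3P) => [[/= TS nTS /forallP hz]|].
  have [x xST] : exists x, x \in S :\: T.
    apply/set0Pn; apply: contra nTS; rewrite setD_eq0 => ST.
    by rewrite -val_eqE /= eqEsubset TS ST.
  have [y /andP [yST ytop] _] := exists_ideal_max hT xST.
  move: yST; rewrite inE => /andP [yT yS].
  have ymax : ideal_max S y.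
    rewrite /ideal_max yS; case e: (p y) ytop => [q|] //; rewrite !inE negb_and negbK.
    case/orP=> [qT|//]; move/is_idealP: (hT) => [_ /(_ y q e qT)].
    by rewrite (negbTE yT).
  exists y => //.
  move: (hz (exist (is_ideal p) _ (ideal_remove_max hS ymax))); rewrite -!val_eqE /= subD1set andbT.
  have -> : T \subset S :\ y.
    by apply/subsetP=> t tT; rewrite !inE (subsetP TS t tT) andbT; apply: contraNneq yT => <-.
  move=> /orP [h|h]; [have /eqP -> : S :\ y == T := h | have /eqP e : S :\ y == S := h] => //.
  by have := setD11 y S; rewrite e yS.
case=> m mmax eT; subst T; move: (mmax) => /andP [mS _].
split => /=; first exact: subD1set.
  by rewrite -val_eqE /=; apply/eqP=> e; have := setD11 m S; rewrite e mS.
apply/forallP=> [[Z hZ]] /=; change ((S :\ m \subset Z) && (Z \subset S) ==> (Z == S :\ m) || (Z == S)).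
apply/implyP=> /andP [s1 s2].
case mZ: (m \in Z).
  apply/orP; right; rewrite eqEsubset s2 /=; apply/subsetP=> v vS.
  by case: (v =P m) => [->//|/eqP vm]; apply: (subsetP s1); rewrite !inE vm.
apply/orP; left; rewrite eqEsubset s1 andbT; apply/subsetP=> v vZ.
by rewrite !inE (subsetP s2 v vZ) andbT; apply: contraTneq vZ => ->; rewrite mZ.
Qed.

Lemma join_irr_idealsP (S : fp_car (ideals p)) :
  reflect (exists m, forall m', ideal_max (val S) m' = (m' == m)) (join_irr S).
Proof.
apply: (iffP cards1P) => [[T0 e]|[m maxE]].
  have : T0 \in [set T | lcov S T] by rewrite e set11.
  rewrite inE => /lcov_idealsP [m mmax eT0]; exists m => m'.
  apply/idP/eqP => [m'max|->//].
  have : exist (is_ideal p) _ (ideal_remove_max (valP S) m'max) \in [set T | lcov S T].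
    by rewrite inE; apply/lcov_idealsP; exists m'.
  rewrite e inE -val_eqE /= eT0 => /eqP eq.
  case: (m' =P m) => // /eqP nm; have : m' \in val S :\ m by rewrite !inE nm; case/andP: m'max.
  by rewrite -eq setD11.
have mmax : ideal_max (val S) m by rewrite maxE.
exists (exist (is_ideal p) _ (ideal_remove_max (valP S) mmax)); apply/setP=> T; rewrite !inE.
apply/lcov_idealsP/eqP => [[m' m'max eT]|->]; last by exists m.
by apply: val_inj; rewrite eT /=; move: m'max; rewrite maxE => /eqP ->.
Qed.

Lemma ideal_down m : p m != None -> is_ideal p (down p m).
Proof.
move=> hm; apply/is_idealP; split.
  by move=> i /(downP p_acyclic) h; exact: reach_nonroot h hm.
by move=> i q e /(downP p_acyclic) h; apply/(downP p_acyclic); exact: reach_trans (reach_parent e) h.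
Qed.

Lemma ideal_max_down m m' : ideal_max (down p m) m' = (m' == m).
Proof.
apply/idP/eqP => [/andP [/(downP p_acyclic) h t]|->].
  case: (reach_case h) => // [[q e hq]].
  by rewrite e in t; move/negP: t; case; apply/(downP p_acyclic).
rewrite /ideal_max; apply/andP; split; first exact/(downP p_acyclic)/reach_refl.
case e: (p m) => [q|] //; apply/negP => /(downP p_acyclic) h.
have qm := reach_antisym p_acyclic h (reach_parent e); subst q.
by move: (parent_neq p_acyclic m); rewrite e eqxx.
Qed.

(* Birkhoff's representation: a nonroot [m] corresponds to the principal ideal
   [down p m]. *)
Lemma nonroots_join_irreducibles : fposet_iso (nonroots p) (join_irreducibles (ideals p)).
Proof.
have down_ji (a : fp_car (nonroots p)) :
    join_irr (exist (is_ideal p) _ (ideal_down (valP a)) : fp_car (ideals p)).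
  by apply/join_irr_idealsP; exists (val a) => m'; rewrite ideal_max_down.
apply: (@iso_inj_surj (nonroots p) (join_irreducibles (ideals p))
  (fun a => exist (@join_irr (ideals p)) _ (down_ji a))).
- move=> a b /(congr1 (fun x => val (val x))) /= de; apply: val_inj.
  by apply: (reach_antisym p_acyclic); apply/(downP p_acyclic); [rewrite -de | rewrite de];
    apply/(downP p_acyclic)/reach_refl.
- move=> [[S hS] hji]; have /join_irr_idealsP [m /= maxE] := hji.
  have mmax : ideal_max S m by rewrite maxE.
  have hm : p m != None by move/is_idealP: (hS) => [h1 _]; apply: h1; case/andP: mmax.
  exists (exist _ m hm); do 2 apply: val_inj => /=.
  apply/setP=> v; apply/idP/idP => [/(downP p_acyclic) h|vS].
    by apply: (ideal_reach hS h); case/andP: mmax.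
  have [N hN] := p_acyclic.
  have [y [yS ry hy]] := exists_topmost (Q := fun x => x \in S) (hN v) vS.
  have ymax : ideal_max S y by rewrite /ideal_max yS; case e: (p y) => [q|] //; exact: hy.
  by move: ymax; rewrite maxE => /eqP <-; apply/(downP p_acyclic).
- move=> a b /=; apply/idP/subsetP => [h v /(downP p_acyclic) hv|h].
    by apply/(downP p_acyclic); exact: reach_trans hv (elimT (downP p_acyclic _ _) h).
  by apply: h; exact/(downP p_acyclic)/reach_refl.
Qed.

End IdealJoinIrreducibles.

Lemma nonroots_iso (V W : finType) (p : V -> option V) (q : W -> option W) :
  acyclic p -> acyclic q -> fposet_iso (ideals p) (ideals q) ->
  fposet_iso (nonroots p) (nonroots q).
Proof.
move=> hp hq i; apply: iso_trans (nonroots_join_irreducibles hp) _.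
exact: iso_trans (iso_join_irreducibles i) (iso_sym (nonroots_join_irreducibles hq)).
Qed.

Definition is_max (P : fposet) (a : fp_car P) : Prop := forall b, fp_le a b -> b = a.

Definition is_cover (P : fposet) (a b : fp_car P) : Prop :=
  [/\ fp_le a b, a <> b & forall z, fp_le a z -> fp_le z b -> z = a \/ z = b].

Section IsoInvariants.
Variables (P Q : fposet) (f : fp_car P -> fp_car Q).
Hypotheses (f_bij : bijective f) (f_le : forall x y, fp_le x y = fp_le (f x) (f y)).

Lemma iso_is_max a : is_max a -> is_max (f a).
Proof. by case: f_bij => g fg gf ha b; rewrite -[b]gf -f_le => /ha ->. Qed.

Lemma iso_is_cover a b : is_cover a b -> is_cover (f a) (f b).
Proof.
case: f_bij => g fg gf [l n h]; split.
- by rewrite -f_le.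
- by move=> /(bij_inj f_bij).
- by move=> z; rewrite -[z]gf -!f_le => h1 h2; case: (h _ h1 h2) => ->; [left|right].
Qed.

End IsoInvariants.

Section NonrootOrder.
Variables (V : finType) (p : V -> option V).
Hypothesis p_acyclic : acyclic p.

Lemma le_nonrootsP (a b : fp_car (nonroots p)) : reflect (reach p (val a) (val b)) (fp_le a b).
Proof. exact: downP. Qed.

Lemma nonroots_refl : reflexive (@fp_le (nonroots p)).
Proof. by move=> a; apply/le_nonrootsP/reach_refl. Qed.

Lemma nonroots_trans : transitive (@fp_le (nonroots p)).
Proof.
by move=> b a c /le_nonrootsP ab /le_nonrootsP bc; apply/le_nonrootsP; exact: reach_trans ab bc.
Qed.

Lemma is_max_nonrootsP (a : fp_car (nonroots p)) :
  is_max a <-> (forall q, p (val a) = Some q -> p q = None).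
Proof.
split.
  move=> h q e; case eq: (p q) => [w|] //; exfalso.
  have hq : p q != None by rewrite eq.
  have := h (exist _ q hq) (introT (le_nonrootsP _ (exist _ q hq)) (reach_parent e)).
  move/(congr1 val) => qa; have {}qa : q = val a := qa.
  by move: (parent_neq p_acyclic (val a)); rewrite -{2}qa e eqxx.
move=> h b /le_nonrootsP r; apply: val_inj.
case: (reach_case r) => [//|[q e rq]].
case: (reach_case rq) => [qb|[w e2 _]]; last by rewrite (h q e) in e2.
by move: (valP b); rewrite -qb (h q e).
Qed.

Lemma is_cover_nonrootsP (a b : fp_car (nonroots p)) :
  is_cover a b <-> p (val a) = Some (val b).
Proof.
split.
  move=> [/le_nonrootsP r n h].
  case: (reach_case r) => [e|[q e rq]]; first by case: n; apply: val_inj.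
  have hq : p q != None by exact: reach_nonroot rq (valP b).
  have := h (exist _ q hq) (introT (le_nonrootsP _ (exist _ q hq)) (reach_parent e))
            (introT (le_nonrootsP (exist _ q hq) _) rq).
  case=> /(congr1 val) qe; [have {}qe : q = val a := qe | have {}qe : q = val b := qe].
    by move: (parent_neq p_acyclic (val a)); rewrite -{2}qe e eqxx.
  by rewrite qe in e.
move=> e; split.
- exact/le_nonrootsP/reach_parent.
- by move=> ab; move: (parent_neq p_acyclic (val a)); rewrite e ab eqxx.
- move=> z /le_nonrootsP r1 /le_nonrootsP r2.
  case: (reach_case r1) => [az|[q e' rq]]; first by left; apply: val_inj.
  rewrite e in e'; case: e' => qb; subst q.
  by right; apply: val_inj; apply: (reach_antisym p_acyclic r2).
Qed.

End NonrootOrder.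

Definition extend_by_root (V W : finType) (p : V -> option V) (q : W -> option W)
    (phi : fp_car (nonroots p) -> fp_car (nonroots q)) (w0 : W) (x : V) : W :=
  if insub x is Some a then val (phi a) else w0.

Section ExtendByRoot.
Variables (V W : finType) (p : V -> option V) (q : W -> option W).
Implicit Type phi : fp_car (nonroots p) -> fp_car (nonroots q).

Lemma extend_by_root_val phi w0 a : extend_by_root phi w0 (val a) = val (phi a).
Proof. by rewrite /extend_by_root valK. Qed.

Lemma extend_by_root_root phi w0 x : p x = None -> extend_by_root phi w0 x = w0.
Proof. by move=> e; rewrite /extend_by_root insubF //= e. Qed.

Lemma nonroot_val x : p x != None -> exists a : fp_car (nonroots p), x = val a.
Proof. by move=> nx; exists (Sub x nx). Qed.

End ExtendByRoot.

Lemma extend_by_rootK (V W : finType) (p : V -> option V) (q : W -> option W)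
    (phi : fp_car (nonroots p) -> fp_car (nonroots q))
    (psi : fp_car (nonroots q) -> fp_car (nonroots p)) v0 w0 :
  cancel phi psi -> (forall x, p x = None -> x = v0) -> q w0 = None ->
  cancel (extend_by_root phi w0) (extend_by_root psi v0).
Proof.
move=> phiK v0_root w0_root x; case: (p x =P None) => [xr|/eqP /nonroot_val [a ->]].
  by rewrite !extend_by_root_root // (v0_root x xr).
by rewrite !extend_by_root_val phiK.
Qed.

Lemma tree_iso_of_nonroots_iso (u v : rtree) :
  is_rtree u -> is_rtree v -> fposet_iso (nonroots (rt_par u)) (nonroots (rt_par v)) ->
  tree_iso u v.
Proof.
move=> /andP [/is_forest_acyclic fu /cards1P [ru eu]] /andP [/is_forest_acyclic fv /cards1P [rv ev]].
move=> [phi [phi_bij phi_le]]; have [psi phiK psiK] := phi_bij.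
have rootE (t : rtree) r : [set i | rt_par t i == None] = [set r] ->
    forall x, rt_par t x = None -> x = r.
  by move=> e x xr; apply/set1P; rewrite -e inE xr.
have ru_root : rt_par u ru = None by apply/eqP; move: (set11 ru); rewrite -eu inE.
have rv_root : rt_par v rv = None by apply/eqP; move: (set11 rv); rewrite -ev inE.
exists (extend_by_root phi rv); split.
  by exists (extend_by_root psi ru); apply: extend_by_rootK => //; exact: rootE.
move=> x; case: (rt_par u x =P None) => [xr|/eqP /nonroot_val [a ->]].
  by rewrite xr extend_by_root_root.
rewrite extend_by_root_val; case e: (rt_par u (val a)) => [q|]; last by move: (valP a); rewrite e.
case: (rt_par u q =P None) => [qr|/eqP /nonroot_val [b qb]]; last first.
  have cov : is_cover a b by apply/(is_cover_nonrootsP fu); rewrite e qb.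
  move/(is_cover_nonrootsP fv): (iso_is_cover phi_bij phi_le cov) => ->.
  by rewrite qb /= extend_by_root_val.
have amax : is_max a by apply/(is_max_nonrootsP fu) => q'; rewrite e => -[<-].
have /(is_max_nonrootsP fv) pmax := iso_is_max phi_bij phi_le amax.
rewrite /= extend_by_root_root //; case e': (rt_par v (val (phi a))) => [q'|].
  by rewrite (rootE _ _ ev q' (pmax q' e')).
by move: (valP (phi a)); rewrite e'.
Qed.

(** * Uniqueness of the factorisation *)

Lemma homo_component (P Q : fposet) (I J : eqType) (compP : fp_car P -> I)
    (compQ : fp_car Q -> J) (h : fp_car P -> fp_car Q) (tP : fp_car P) (tQ : fp_car Q) i j :
  transitive (@fp_le Q) -> {homo h : x y / fp_le x y} ->
  (forall a, fp_le a tP = (compP a == i)) -> (forall b, fp_le b tQ = (compQ b == j)) ->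
  compQ (h tP) = j -> forall a, compP a = i -> compQ (h a) = j.
Proof.
move=> Q_trans h_homo tPE tQE htP a ai; apply/eqP; rewrite -tQE.
apply: (Q_trans (h tP)); first by apply: h_homo; rewrite tPE ai.
by rewrite tQE htP.
Qed.

(* Two posets that split into components, each with a greatest element: an
   isomorphism matches the components, since it matches their greatest elements. *)
Section ComponentMatching.
Variables (P Q : fposet) (I J : eqType).
Variables (compP : fp_car P -> I) (compQ : fp_car Q -> J).
Hypotheses (P_refl : reflexive (@fp_le P)) (P_trans : transitive (@fp_le P)).
Hypotheses (Q_refl : reflexive (@fp_le Q)) (Q_trans : transitive (@fp_le Q)).
Hypothesis P_top : forall i, exists t, forall a, fp_le a t = (compP a == i).
Hypothesis Q_top : forall j, exists t, forall b, fp_le b t = (compQ b == j).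

Lemma iso_components : fposet_iso P Q ->
  exists f : I -> J, bijective f /\
    forall i, fposet_iso (fposet_sub (fun a => compP a == i)) (fposet_sub (fun b => compQ b == f i)).
Proof.
move=> [psi [psi_bij psi_le]]; have [phi psiK phiK] := psi_bij.
have phi_le x y : fp_le x y = fp_le (phi x) (phi y) by rewrite psi_le !phiK.
have tP_ex i : exists t, [forall a, fp_le a t == (compP a == i)].
  by have [t ht] := P_top i; exists t; apply/forallP => a; rewrite ht.
have tQ_ex j : exists t, [forall b, fp_le b t == (compQ b == j)].
  by have [t ht] := Q_top j; exists t; apply/forallP => b; rewrite ht.
pose tP i := xchoose (tP_ex i); pose tQ j := xchoose (tQ_ex j).
have tPE i a : fp_le a (tP i) = (compP a == i) by apply/eqP/(forallP (xchooseP (tP_ex i))).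
have tQE j b : fp_le b (tQ j) = (compQ b == j) by apply/eqP/(forallP (xchooseP (tQ_ex j))).
pose f i := compQ (psi (tP i)); pose g j := compP (phi (tQ j)).
have hf a : compQ (psi a) = f (compP a).
  by apply: (homo_component Q_trans _ (tPE _) (tQE _)) => // x y; rewrite psi_le.
have hg b : compP (phi b) = g (compQ b).
  by apply: (homo_component P_trans _ (tQE _) (tPE _)) => // x y; rewrite phi_le.
have gf : cancel f g.
  by move=> i; rewrite /f -hg psiK; apply/eqP; rewrite -tPE P_refl.
have fg : cancel g f.
  by move=> j; rewrite /g -hf phiK; apply/eqP; rewrite -tQE Q_refl.
exists f; split; first exact: Bijective gf fg.
by move=> i; apply: (iso_sub psi_bij psi_le) => a; rewrite hf (can_eq gf).
Qed.

End ComponentMatching.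

Lemma all_nth_ord (T : Type) (x0 : T) (P : pred T) (s : seq T) (i : 'I_(size s)) :
  all P s -> P (nth x0 s i).
Proof. by move/(all_nthP x0) => h; exact: h _ (ltn_ord i). Qed.

Lemma valence1_root_child (u : rtree) : is_rtree u -> root_valence1 u ->
  exists2 c, rt_par u c != None & forall v, rt_par u v != None -> reach (rt_par u) v c.
Proof.
move=> /andP [/is_forest_acyclic hf /cards1P [r' er]].
move=> /existsP [r /andP [/eqP r_root /cards1P [c ec]]].
have root_uniq v : rt_par u v = None -> v = r'.
  by move=> e; apply/set1P; rewrite -er inE e.
have rr' : r = r' by exact: root_uniq.
subst r'; exists c; first by move: (set11 c); rewrite -ec inE => /eqP ->.
move=> v /(reach_child_of_root hf root_uniq) [c' c'_child vc'].
suff <- : c' = c by [].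
by apply/set1P; rewrite -ec inE c'_child.
Qed.

Section SeqForest.
Variable us : seq rtree.
Hypothesis us_trees : all is_rtree us.

Lemma seq_par_iter i (x : tree_vtx i) k :
  iter k (obind (@seq_par us)) (Some (Tagged (@tree_vtx us) x)) =
  omap (Tagged (@tree_vtx us)) (iter k (obind (rt_par (nth dummy_tree us i))) (Some x)).
Proof. by elim: k => [//|k IH]; rewrite iterS IH iterS; case: (iter k _ _). Qed.

Lemma seq_par_nonroot i (x : tree_vtx i) :
  (seq_par (Tagged (@tree_vtx us) x) != None) = (rt_par (nth dummy_tree us i) x != None).
Proof. by rewrite /seq_par /=; case: (rt_par _ x). Qed.

Lemma tree_acyclic (i : 'I_(size us)) : acyclic (rt_par (nth dummy_tree us i)).
Proof. by apply: is_forest_acyclic; case/andP: (all_nth_ord dummy_tree i us_trees). Qed.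

Lemma seq_par_acyclic : acyclic (@seq_par us).
Proof.
exists #|seq_vtx us| => -[i x]; apply: (@iter_obind_None_card _ _ _ (rt_n (nth dummy_tree us i))).
case/andP: (all_nth_ord dummy_tree i us_trees) => /forallP /(_ x) /eqP hx _.
by rewrite seq_par_iter hx.
Qed.

Lemma reach_seq_par_tag i (x : tree_vtx i) w :
  reach (@seq_par us) (Tagged (@tree_vtx us) x) w -> tag w = i.
Proof. by move=> [k]; rewrite seq_par_iter; case: (iter k _ _) => //= y [<-]. Qed.

Lemma reach_seq_parE i (x y : tree_vtx i) :
  reach (@seq_par us) (Tagged (@tree_vtx us) x) (Tagged (@tree_vtx us) y) <->
  reach (rt_par (nth dummy_tree us i)) x y.
Proof.
split=> -[k e]; exists k; move: e; rewrite seq_par_iter; last by move->.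
by case: (iter k _ _) => //= z [] /(@eq_from_Tagged _ (@tree_vtx us)) ->.
Qed.

Lemma nonroots_component (i : 'I_(size us)) :
  fposet_iso (nonroots (rt_par (nth dummy_tree us i)))
             (fposet_sub (fun a : fp_car (nonroots (@seq_par us)) => tag (val a) == i)).
Proof.
have lift_nonroot (x : fp_car (nonroots (rt_par (nth dummy_tree us i)))) :
    seq_par (Tagged (@tree_vtx us) (val x)) != None by rewrite seq_par_nonroot (valP x).
pose lift x : fp_car (nonroots (@seq_par us)) :=
  exist (fun v => seq_par v != None) _ (lift_nonroot x).
have lift_tag x : tag (val (lift x)) == i by [].
pose A (a : fp_car (nonroots (@seq_par us))) := tag (val a) == i.
apply: (@iso_inj_surj _ (fposet_sub A) (fun x => exist A _ (lift_tag x))).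
- move=> x y /(congr1 (fun a => val (val a))) /= /(@eq_from_Tagged _ (@tree_vtx us)) e.
  exact: val_inj.
- move=> [[[j y] hy] ji]; move/eqP: (ji) => /= eji; subst j.
  have hy' : rt_par (nth dummy_tree us i) y != None by rewrite -seq_par_nonroot.
  by exists (Sub y hy'); do 2 apply: val_inj.
- move=> x y; change (fp_le x y = fp_le (lift x) (lift y)).
  apply/(le_nonrootsP (tree_acyclic i))/(le_nonrootsP seq_par_acyclic).
  - exact: (proj2 (reach_seq_parE (val x) (val y))).
  - exact: (proj1 (reach_seq_parE (val x) (val y))).
Qed.

Lemma valence1_component_top : all root_valence1 us ->
  forall i : 'I_(size us),
    exists t, forall a : fp_car (nonroots (@seq_par us)), fp_le a t = (tag (val a) == i).
Proof.
move=> us_val1 i.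
have [c c_nonroot c_top] := valence1_root_child (all_nth_ord dummy_tree i us_trees)
                                                (all_nth_ord dummy_tree i us_val1).
have hc : seq_par (Tagged (@tree_vtx us) c) != None by rewrite seq_par_nonroot.
exists (exist (fun v => seq_par v != None) _ hc) => -[[j y] hy].
apply/idP/eqP => [/(le_nonrootsP seq_par_acyclic) /reach_seq_par_tag /= -> //|ji].
have {}ji : j = i := ji; subst j.
apply/(le_nonrootsP seq_par_acyclic)/(reach_seq_parE y c)/c_top.
by rewrite -seq_par_nonroot.
Qed.

End SeqForest.

Lemma prod_ival_valence1_uniq (us vs : seq rtree) :
  all is_rtree us -> all root_valence1 us -> all is_rtree vs -> all root_valence1 vs ->
  fposet_iso (prod_ival us) (prod_ival vs) ->
  exists f : 'I_(size us) -> 'I_(size vs), bijective f /\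
    forall i : 'I_(size us), tree_iso (nth dummy_tree us i) (nth dummy_tree vs (f i)).
Proof.
move=> hu hu1 hv hv1 iso.
have forests ws : all is_rtree ws -> all (fun t => is_forest (rt_par t)) ws.
  by apply: sub_all => t /andP [].
have hu' := seq_par_acyclic hu; have hv' := seq_par_acyclic hv.
have isoN : fposet_iso (nonroots (@seq_par us)) (nonroots (@seq_par vs)).
  apply: nonroots_iso hu' hv' _; apply: iso_trans (iso_sym (prod_ival_ideals (forests _ hu))) _.
  exact: iso_trans iso (prod_ival_ideals (forests _ hv)).
have [f [f_bij comp_iso]] := iso_components
  (compP := fun a : fp_car (nonroots (@seq_par us)) => tag (val a))
  (compQ := fun b : fp_car (nonroots (@seq_par vs)) => tag (val b)) (nonroots_refl hu') (nonroots_trans hu')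
  (nonroots_refl hv') (nonroots_trans hv') (valence1_component_top hu hu1)
  (valence1_component_top hv hv1) isoN.
exists f; split=> // i.
apply: tree_iso_of_nonroots_iso (all_nth_ord _ i hu) (all_nth_ord _ (f i) hv) _.
apply: iso_trans (nonroots_component hu i) _.
exact: iso_trans (comp_iso i) (iso_sym (nonroots_component hv (f i))).
Qed.

Theorem proposition6p8 :
  (forall ts : seq rtree, all is_rtree ts ->
     exists us : seq rtree,
       [/\ all is_rtree us, all root_valence1 us &
           fposet_iso (prod_ival ts) (prod_ival us)])
  /\
  (forall us vs : seq rtree,
     all is_rtree us -> all root_valence1 us ->
     all is_rtree vs -> all root_valence1 vs ->
     fposet_iso (prod_ival us) (prod_ival vs) ->
     exists f : 'I_(size us) -> 'I_(size vs),
       bijective f /\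
       forall i : 'I_(size us), tree_iso (nth dummy_tree us i) (nth dummy_tree vs (f i))).
Proof. by split; [exact: prod_ival_valence1_factor | exact: prod_ival_valence1_uniq]. Qed.
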